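(* Let $S_1\subseteq S$ with $|S_1|>1$ and $a>0$, and let $q$ be an irreducible transition matrix on $S$ such that $\mathbf P_{s,q}\big(T^+_{\overline{S_1}\cup\{t\}}=T^+_{\{t\}}\big)\ge a$ for all $s,t\in S_1$. Then for every $y\in S_1$ there exists a $(a/L)^{|S|}$-maximal graph $\overline g\in G(S_1\setminus\{y\})$ such that every path of $\overline g$ leads to $y$.
   Context: $S$ is a finite set with $|S|\ge2$, $\overline C=S\setminus C$. $(\mathbf s_n)_{n\ge0}$ is a Markov chain with transition matrix $q$, $\mathbf P_{s,q}$ its law from $\mathbf s_0=s$, and $T^+_D=\min\{n\ge1:\mathbf s_n\in D\}$ ($\min\emptyset=+\infty$). For $C\subseteq S$, a $C$-graph is a directed graph on vertex set $S$ without cycles such that each $s\in C$ has exactly one outgoing edge $(s,g(s))$ and no state outside $C$ has an outgoing edge; from $s\in C$, following the edges one reaches a unique state of $\overline C$, to which $s$ is said to lead. $G(C)$ is the set of $C$-graphs, $p(g)=\prod_{s\in C}q(g(s)\mid s)$, and for $\eta>0$, $g$ is $\eta$-maximal if $p(g)\ge\eta\max_{g'\in G(C)}p(g')$. $L=\sum_{n=1}^{|S|-1}\binom{|S|}{n}n^{|S|}$. *)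

From HB Require Import structures.
From mathcomp Require Import all_boot all_order all_algebra.
From mathcomp Require Import all_classical all_reals all_analysis.
Set Implicit Arguments. Unset Strict Implicit. Unset Printing Implicit Defensive.
Import Order.TTheory GRing.Theory Num.Theory.
Import numFieldNormedType.Exports.
Local Open Scope ring_scope.

Section MC.
Variables (R : realType) (S : finType).

(* A transition matrix: q x y = q(y | x), probability of jumping from x to y. *)
Definition stochastic (q : S -> S -> R) : Prop :=
  (forall x y, 0 <= q x y) /\ (forall x, \sum_(y : S) q x y = 1).

(* Probability under P_{x,q} of the cylinder (s_1,...,s_n) = w. *)
Definition path_prob (q : S -> S -> R) (x : S) (n : nat) (w : n.-tuple S) : R :=
  \prod_(k < n) q (nth x (x :: w) k) (nth x w k).

Definition irreducible (q : S -> S -> R) : Prop :=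
  forall x y : S, exists n : nat, exists w : n.-tuple S,
    last x w = y /\ 0 < path_prob q x w.

(* P_{x,q}(T^+_A = n+1 and s_{n+1} = t) *)
Definition hit_at (q : S -> S -> R) (x : S) (A : {set S}) (t : S) (n : nat) : R :=
  \sum_(w : n.+1.-tuple S | all (fun z => z \notin A) (take n w) && (last x w == t))
     path_prob q x w.

(* P_{x,q}(T^+_A > n) *)
Definition avoid_upto (q : S -> S -> R) (x : S) (A : {set S}) (n : nat) : R :=
  \sum_(w : n.-tuple S | all (fun z => z \notin A) w) path_prob q x w.

(* P_{x,q}(T^+_A = T^+_{t}) for t \in A:
   the event is {T^+_A < oo and s_{T^+_A} = t} \cup {T^+_A = +oo}. *)
Definition prob_first_hit (q : S -> S -> R) (x : S) (A : {set S}) (t : S) : R :=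
  limn (fun N => \sum_(0 <= n < N) hit_at q x A t n)
  + limn (avoid_upto q x A).

Definition edge_rel (E : {set S * S}) : rel S := fun a b => (a, b) \in E.

Definition is_Cgraph (C : {set S}) (E : {set S * S}) : Prop :=
  (forall s, s \in C -> exists! t, (s, t) \in E) /\
  (forall s t, s \notin C -> (s, t) \notin E) /\
  (forall a b, (a, b) \in E -> ~~ connect (edge_rel E) b a).

Definition is_Cgraphb (C : {set S}) (E : {set S * S}) : bool :=
  `[< is_Cgraph C E >].

(* p(g) = prod_{s in C} q(g(s) | s) = product over the edges of g *)
Definition pgraph (q : S -> S -> R) (E : {set S * S}) : R :=
  \prod_(e in E) q e.1 e.2.

Definition max_pgraph (q : S -> S -> R) (C : {set S}) : R :=
  \big[Num.max/0]_(E : {set S * S} | is_Cgraphb C E) pgraph q E.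

Definition eta_maximal (q : S -> S -> R) (eta : R) (C : {set S}) (E : {set S * S}) : Prop :=
  is_Cgraph C E /\ eta * max_pgraph q C <= pgraph q E.

Definition leads_to (C : {set S}) (E : {set S * S}) (s u : S) : Prop :=
  u \notin C /\ connect (edge_rel E) s u.

End MC.

Definition Lconst (N : nat) : nat := \sum_(1 <= n < N) 'C(N, n) * n ^ N.

(* Let C := S1 :\ y, A := ~: C, and for a C-graph E let p(E) be its weight.
   Write H(s) for the total weight of the C-graphs in which s leads to y and
   Z for the total weight of all C-graphs.  Redirecting the edge leaving x to
   the first step of the chain shows that H is superharmonic on C; since the
   chain leaves C geometrically fast along any C-graph of positive weight,
   this yields Z * P_s(T^+_A = T^+_y) <= H(s).  There are at most L C-graphs,
   so for every s in C some C-graph g_s in which s leads to y has weight at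
   least (a / L) max p.  Starting from a maximal C-graph E, while some s does
   not lead to y, keep the edges of E on the vertices leading to y and take
   those of g_s elsewhere.  The complementary exchange is again a C-graph, so
   the new graph weighs at least (a / L) p(E), and strictly more vertices lead
   to y; after at most |S| rounds all of them do. *)

From HB Require Import structures.
From mathcomp Require Import all_boot all_order all_algebra.
From mathcomp Require Import all_classical all_reals all_analysis.
Import Order.TTheory GRing.Theory Num.Theory.
Import numFieldNormedType.Exports.
Local Open Scope ring_scope.
Set Implicit Arguments. Unset Strict Implicit. Unset Printing Implicit Defensive.

Local Notation reach E := (connect (edge_rel E)).

Lemma connect_rev_ind (T : finType) (e : rel T) (y : T) (P : T -> Prop) :
  P y -> (forall x z, e x z -> connect e z y -> P z -> P x) ->
  forall x, connect e x y -> P x.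
Proof.
move=> Py IH x /connectP[p]; elim: p x => [|z p IHp] x /=; first by move=> _ <-.
move=> /andP[exz zp] yp; apply: (IH x z exz); last exact: IHp.
by apply/connectP; exists p.
Qed.

Lemma connect_first_step (T : finType) (e : rel T) x y :
  connect e x y -> x != y -> exists2 z, e x z & connect e z y.
Proof.
case/connectP=> -[/= _ ->|z p /= /andP[xz zp] ->]; first by rewrite eqxx.
by exists z => //; apply/connectP; exists p.
Qed.

Lemma big_tuple_cons (R : Type) (idx : R) (op : Monoid.com_law idx) (T : finType) n
    (P : pred (n.+1.-tuple T)) (F : n.+1.-tuple T -> R) :
  \big[op/idx]_(w | P w) F w =
  \big[op/idx]_u \big[op/idx]_(w : n.-tuple T | P [tuple of u :: w]) F [tuple of u :: w].
Proof.
rewrite pair_big_dep (reindex (fun p : T * n.-tuple T => [tuple of p.1 :: p.2])) //=.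
exists (fun w => (thead w, [tuple of behead w])) => [[u w] _|w _] /=.
  by congr pair; apply: val_inj.
by rewrite [RHS]tuple_eta.
Qed.

Lemma big_tuple0 (R : Type) (idx : R) (op : Monoid.law idx) (T : finType)
    (P : pred (0.-tuple T)) (F : 0.-tuple T -> R) :
  \big[op/idx]_(w | P w) F w = if P [tuple] then F [tuple] else idx.
Proof. by rewrite big_mkcond (big_pred1 [tuple]) => // w; apply/esym/eqP/tuple0. Qed.

Lemma limnD_le_nonincreasing (R : realType) (u v : R^nat) (m : R) N :
  nondecreasing_seq u -> nonincreasing_seq v -> (forall n, m <= v n) ->
  nonincreasing_seq (u \+ v) -> limn u + limn v <= u N + v N.
Proof.
move=> u_nd v_ni v_ge uv_ni.
have u_ub : has_ubound (range u).
  exists (u 0%N + v 0%N - m) => _ [n _ <-]; rewrite lerBrDr.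
  by apply: le_trans (uv_ni _ _ (leq0n n)); rewrite /= lerD2l.
have v_lb : has_lbound (range v) by exists m => _ [n _ <-].
have cu : cvgn u by apply: cvgP (nondecreasing_cvgn u_nd u_ub).
have cv : cvgn v by apply: cvgP (nonincreasing_cvgn v_ni v_lb).
rewrite -limD //; apply: nonincreasing_cvgn_ge => //; exact: is_cvgD.
Qed.

Lemma ler_sum_inj (R : numDomainType) (I J : finType) (P : pred I) (Q : pred J)
    (f : I -> J) (F : J -> R) :
  {in P &, injective f} -> (forall i, P i -> Q (f i)) -> (forall j, Q j -> 0 <= F j) ->
  \sum_(i | P i) F (f i) <= \sum_(j | Q j) F j.
Proof.
move=> f_inj PQ F_ge0; change (\sum_(i in P) F (f i) <= \sum_(j | Q j) F j).
rewrite -big_imset //.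
rewrite [leRHS](bigID (mem (f @: P))) /= -[leLHS]addr0 lerD ?sumr_ge0 //; last first.
  by move=> j /andP[Qj _]; apply: F_ge0.
rewrite (eq_bigl (fun j => Q j && (j \in f @: P))) // => j.
by case/boolP: (j \in f @: P) => [/imsetP[i Pi ->]|]; rewrite ?andbF ?PQ.
Qed.

Lemma exists_ge_mean (R : realDomainType) (I : finType) (P : pred I) (F : I -> R) i0 :
  P i0 -> exists2 i, P i & \sum_(j | P j) F j <= #|P|%:R * F i.
Proof.
move=> Pi0; case: (@arg_maxP _ _ _ i0 P F Pi0) => i Pi max_i; exists i => //.
by apply: le_trans (ler_sum _ max_i) _; rewrite sumr_const mulr_natl.
Qed.

Lemma reach_edge (S : finType) (E : {set S * S}) a b :
  (a, b) \in E -> reach E a b.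
Proof. exact: connect1. Qed.

Definition succ (S : finType) (E : {set S * S}) (x : S) : S :=
  odflt x [pick t | (x, t) \in E].

Section Cgraph.
Variables (S : finType) (C : {set S}) (E : {set S * S}).
Hypothesis G : is_Cgraph C E.

Lemma edge_src_mem x t : (x, t) \in E -> x \in C.
Proof. by case: G => _ [out _] xt; apply: contraTT xt => /out ->. Qed.

Lemma succ_edge x : x \in C -> (x, succ E x) \in E.
Proof.
case: G => [uniq_out _] xC; rewrite /succ; case: pickP => [//|none].
by have [t [xt _]] := uniq_out x xC; rewrite none in xt.
Qed.

Lemma edge_succ x t : (x, t) \in E -> t = succ E x.
Proof.
move=> xt; have xC := edge_src_mem xt; case: G => [uniq_out _].
have [t0 [_ uniq_t0]] := uniq_out x xC.
by rewrite -(uniq_t0 t xt); apply: uniq_t0; apply: succ_edge.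
Qed.

Lemma succ_notin x : x \notin C -> succ E x = x.
Proof.
case: G => _ [out _] xC; rewrite /succ; case: pickP => [t xt|//].
by rewrite (negbTE (out x t xC)) in xt.
Qed.

Lemma edge_not_reach_back a b : (a, b) \in E -> ~~ reach E b a.
Proof. by case: G => _ [_ acyclic]; apply: acyclic. Qed.

Lemma not_reach_succ x : x \in C -> ~~ reach E (succ E x) x.
Proof. by move=> xC; apply: edge_not_reach_back; apply: succ_edge. Qed.

Lemma succ_neq x : x \in C -> succ E x != x.
Proof. by move=> xC; apply: contraNneq (not_reach_succ xC) => ->. Qed.

Lemma reach_notin x z : x \notin C -> reach E x z -> z = x.
Proof.
move=> xC xz; apply/esym/eqP; apply: contraNT xC => /(connect_first_step xz)[w xw _].
exact: edge_src_mem xw.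
Qed.

Lemma reach_confluent u x y : y \notin C -> reach E u x -> reach E u y -> reach E x y.
Proof.
move=> yC ux uy; move: uy ux; apply: (@connect_rev_ind _ _ y
  (fun z => reach E z x -> reach E x y)).
  by move=> yx; rewrite (reach_notin yC yx) connect0.
move=> z w zw wy IH zx; have [<-|zNx] := eqVneq z x.
  exact: connect_trans (reach_edge zw) wy.
have [w' zw' w'x] := connect_first_step zx zNx.
by apply: IH; rewrite (edge_succ zw) -(edge_succ zw').
Qed.

Lemma Cgraph_edgeE a b : ((a, b) \in E) = (a \in C) && (b == succ E a).
Proof.
apply/idP/andP => [ab|[aC /eqP->]]; last exact: succ_edge.
by rewrite (edge_src_mem ab) -(edge_succ ab).
Qed.

Lemma card_reach_succ_lt x : x \in C ->
  (#|[set z | reach E (succ E x) z]| < #|[set z | reach E x z]|)%N.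
Proof.
move=> xC; apply: proper_card; apply/properP; split.
  apply/fintype.subsetP => z; rewrite !inE; apply: connect_trans.
  exact: reach_edge (succ_edge xC).
by exists x; rewrite !inE ?connect0 // (negbTE (not_reach_succ xC)).
Qed.

End Cgraph.

Lemma is_CgraphbP (S : finType) (C : {set S}) (E : {set S * S}) :
  reflect (is_Cgraph C E) (is_Cgraphb C E).
Proof. exact: asboolP. Qed.

Definition star_graph (S : finType) (C : {set S}) (y : S) : {set S * S} :=
  [set e | (e.1 \in C) && (e.2 == y)].

Section StarGraph.
Variables (S : finType) (C : {set S}) (y : S).
Hypothesis yC : y \notin C.

Lemma reach_star_graph x : x \in C -> reach (star_graph C y) x y.
Proof. by move=> xC; apply: reach_edge; rewrite inE /= xC eqxx. Qed.

Lemma star_graph_Cgraph : is_Cgraph C (star_graph C y).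
Proof.
split; [|split].
- move=> s sC; exists y; split=> [|t]; first by rewrite inE /= sC eqxx.
  by rewrite inE /= => /andP[_ /eqP].
- by move=> s t sC; rewrite inE /= (negbTE sC).
- move=> a b; rewrite inE /= => /andP[aC /eqP->]; apply/negP => ya.
  have [ya'|yNa] := eqVneq y a; first by move: yC; rewrite ya' aC.
  by have [z] := connect_first_step ya yNa; rewrite /edge_rel inE /= (negbTE yC).
Qed.
End StarGraph.

(* A C-graph is determined by its successor map, which has no fixed point on C
   and is the identity off C. *)
Lemma card_Cgraphs (S : finType) (C : {set S}) : (1 < #|S|)%N ->
  (#|[set E : {set S * S} | is_Cgraphb C E]| <= #|S|.-1 ^ #|S|)%N.
Proof.
move=> S_gt1; pose F x : pred S := if x \in C then predC1 x else pred1 x.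
pose succ_fun (E : {set S * S}) : {dffun forall x : S, S} := [ffun x => succ E x].
have succ_fun_inj : {in [set E | is_Cgraphb C E] &, injective succ_fun}.
  move=> E1 E2; rewrite !inE => G1 G2 eq_succ.
  apply/setP => -[a b]; rewrite (Cgraph_edgeE G1) (Cgraph_edgeE G2).
  by move/ffunP/(_ a): eq_succ; rewrite !ffunE => ->.
rewrite -(card_in_imset succ_fun_inj).
apply: leq_trans (_ : #|family F| <= _)%N.
  apply: subset_leq_card; apply/fintype.subsetP => g /imsetP[E]; rewrite inE => /is_CgraphbP G ->.
  apply/familyP => x; rewrite /F ffunE; case: ifPn => xC; rewrite inE.
    exact: (succ_neq G xC).
  by rewrite (succ_notin G xC).
rewrite card_family foldrE big_image /= -prod_nat_const; apply: leq_prod => x _.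
rewrite /F; case: ifP => _; first by rewrite cardC1.
by rewrite card1 -ltnS prednK // ltnW.
Qed.

Lemma Lconst_ge (N : nat) : (1 < N)%N -> (N.-1 ^ N <= Lconst N)%N.
Proof.
case: N => [|[|n]] // _; rewrite /Lconst big_nat_recr //=.
by apply: leq_trans (leq_addl _ _); rewrite leq_pmull // bin_gt0 leqnSn.
Qed.

Definition redirect (S : finType) (E : {set S * S}) (x u : S) : {set S * S} :=
  (x, u) |: [set e in E | e.1 != x].

Lemma redirectE (S : finType) (E : {set S * S}) x u a b :
  ((a, b) \in redirect E x u) = if a == x then b == u else (a, b) \in E.
Proof. by rewrite !inE xpair_eqE /=; case: (a == x); rewrite ?andbT ?andbF ?orbF. Qed.

Section Redirect.
Variables (S : finType) (C : {set S}) (E : {set S * S}) (x u : S).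

Lemma redirect_edge : (x, u) \in redirect E x u.
Proof. by rewrite redirectE !eqxx. Qed.

Lemma reach_redirect_to z : reach (redirect E x u) z x -> reach E z x.
Proof.
move: z; apply: connect_rev_ind => [|a b]; first exact: connect0.
rewrite [edge_rel _ _ _]redirectE; case: eqP => [-> _ _ _|_ ab _ bx].
  exact: connect0.
exact: connect_trans (reach_edge ab) bx.
Qed.

Hypothesis uNx : ~~ reach E u x.

Lemma reach_redirect y : reach E u y -> reach (redirect E x u) u y.
Proof.
move=> uy; pose P z := reach E z x \/ reach (redirect E x u) z y.
suff : P u by case=> // ux; move: uNx; rewrite ux.
apply: (connect_rev_ind (P := P) _ _ uy) => [|z w zw _ [wx|wy]].
- by right; exact: connect0.
- by left; exact: connect_trans (reach_edge zw) wx.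
- have [->|zNx] := eqVneq z x; first by left; exact: connect0.
  by right; apply: connect_trans wy; apply: reach_edge; rewrite redirectE (negbTE zNx).
Qed.

Hypothesis G : is_Cgraph C E.
Hypothesis xC : x \in C.

Lemma redirect_Cgraph : is_Cgraph C (redirect E x u).
Proof.
have [uniq_out [out _]] := G; split; [|split].
- move=> s sC; have [->|sNx] := eqVneq s x.
    by exists u; split=> [|t]; rewrite redirectE eqxx // => /eqP ->.
  have [t [st uniq_t]] := uniq_out s sC.
  by exists t; split=> [|t']; rewrite redirectE (negbTE sNx) //; apply: uniq_t.
- move=> s t sC; rewrite redirectE; case: eqP => [sx|_]; last exact: out.
  by rewrite sx xC in sC.
- move=> a b ab; apply/negP => ba.
  have back z : reach (redirect E x u) z a -> reach E z a \/ reach E z x /\ reach E u a.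
    move: z; apply: connect_rev_ind => [|z w]; first by left; exact: connect0.
    rewrite [edge_rel _ _ _]redirectE; case: eqP => [-> /eqP-> _ [ua|[ux _]]|_ zw _].
    - by right; split=> //; exact: connect0.
    - by move: uNx; rewrite ux.
    case=> [wa|[wx ua]]; first by left; exact: connect_trans (reach_edge zw) wa.
    by right; split=> //; exact: connect_trans (reach_edge zw) wx.
  move: ab; rewrite redirectE; case: eqP => [ax /eqP bu|_ ab].
    by case: (back _ ba) => [|[]]; rewrite ax bu => ux; move: uNx; rewrite ux.
  case: (back _ ba) => [|[bx ua]]; first exact/negP/(edge_not_reach_back G ab).
  by move: uNx; rewrite (connect_trans ua (connect_trans (reach_edge ab) bx)).
Qed.

Lemma redirectK : redirect (redirect E x u) x (succ E x) = E.
Proof.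
apply/setP => -[a b]; rewrite !redirectE; case: eqP => [->|//].
by apply/eqP/idP => [->|/(edge_succ G)->]; first exact: (succ_edge G xC).
Qed.

Lemma pgraph_redirect (R : realType) (q : S -> S -> R) :
  pgraph q (redirect E x u) * q x (succ E x) = q x u * pgraph q E.
Proof.
rewrite /pgraph big_setU1 ?inE ?eqxx ?andbF //= -mulrA; congr (_ * _).
rewrite [RHS](bigD1 (x, succ E x)) ?(succ_edge G) //= mulrC; congr (_ * _).
apply: eq_bigl => -[a b]; rewrite !inE xpair_eqE /=.
case: (eqVneq a x) => [->|]; rewrite ?andbT ?andbF //=.
by case: (boolP ((x, b) \in E)) => // /(edge_succ G)->; rewrite eqxx.
Qed.

End Redirect.

Definition mix (S : finType) (E1 E2 : {set S * S}) (B : {set S}) : {set S * S} :=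
  [set e in E1 | e.1 \in B] :|: [set e in E2 | e.1 \notin B].

Lemma mixE (S : finType) (E1 E2 : {set S * S}) B a b :
  ((a, b) \in mix E1 E2 B) = if a \in B then (a, b) \in E1 else (a, b) \in E2.
Proof. by rewrite !inE /=; case: (a \in B); rewrite ?andbT ?andbF ?orbF. Qed.

Lemma mixC (S : finType) (E1 E2 : {set S * S}) B : mix E2 E1 B = mix E1 E2 (~: B).
Proof. by apply/setP => -[a b]; rewrite !mixE inE; case: (a \in B). Qed.

Lemma pgraph_mix_split (R : realType) (S : finType) (q : S -> S -> R) E1 E2 B :
  pgraph q (mix E1 E2 B) =
  \prod_(e in E1 | e.1 \in B) q e.1 e.2 * \prod_(e in E2 | e.1 \notin B) q e.1 e.2.
Proof.
rewrite /pgraph (bigID (fun e => e.1 \in B)) /=.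
by congr (_ * _); apply: eq_bigl => -[a b]; rewrite mixE /=; case: (a \in B); rewrite ?andbF.
Qed.

Lemma pgraph_mix (R : realType) (S : finType) (q : S -> S -> R) E1 E2 B :
  pgraph q (mix E1 E2 B) * pgraph q (mix E2 E1 B) = pgraph q E1 * pgraph q E2.
Proof.
rewrite !pgraph_mix_split /pgraph.
rewrite [X in _ = X * _](bigID (fun e => e.1 \in B)) [X in _ = _ * X](bigID (fun e => e.1 \in B)).
by rewrite /= mulrACA [RHS]mulrACA [X in _ * X]mulrC.
Qed.

Section MixCgraph.
Variables (S : finType) (C B : {set S}) (E1 E2 : {set S * S}).
Hypotheses (G1 : is_Cgraph C E1) (G2 : is_Cgraph C E2).
Hypothesis B_closed : forall a b, (a, b) \in E1 -> a \in B -> (b \in B) || (b \notin C).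

Lemma mix_edge_src a b : (a, b) \in mix E1 E2 B -> a \in C.
Proof.
by rewrite mixE; case: ifP => _ ab; [exact: (edge_src_mem G1 ab)|exact: (edge_src_mem G2 ab)].
Qed.

Lemma reach_mix_from_closed z a : reach (mix E1 E2 B) z a ->
  (z \in B) || (z \notin C) -> reach E1 z a.
Proof.
move: z; apply: connect_rev_ind => [_|z w zw _ IH]; first exact: connect0.
have zC := mix_edge_src zw; rewrite zC orbF => zB.
move: zw; rewrite [edge_rel _ _ _]mixE zB => zw.
exact: connect_trans (reach_edge zw) (IH (B_closed zw zB)).
Qed.

Lemma reach_mix_to_open z a : a \in C -> a \notin B -> reach (mix E1 E2 B) z a ->
  (z \notin B) && reach E2 z a.
Proof.
move=> aC aB; move: z; apply: connect_rev_ind => [|z w zw _ /andP[wB wa]].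
  by rewrite aB connect0.
move: zw; rewrite [edge_rel _ _ _]mixE; case: ifP => zB zw.
  case/orP: (B_closed zw zB) => [wB'|wC]; first by rewrite wB' in wB.
  by rewrite (reach_notin G2 wC wa) (negbTE wC) in aC.
exact: connect_trans (reach_edge zw) wa.
Qed.

Lemma mix_Cgraph : is_Cgraph C (mix E1 E2 B).
Proof.
have [uniq1 [out1 _]] := G1; have [uniq2 [out2 _]] := G2.
split; [|split].
- move=> s sC; have [t1 [st1 U1]] := uniq1 s sC; have [t2 [st2 U2]] := uniq2 s sC.
  case sB: (s \in B); [exists t1|exists t2]; split=> [|t]; rewrite mixE sB //.
    exact: U1.
  exact: U2.
- by move=> s t sC; rewrite mixE; case: ifP => _; [apply: out1|apply: out2].
- move=> a b ab; apply/negP => ba; have aC := mix_edge_src ab.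
  move: ab; rewrite mixE; case: ifP => aB ab.
    by move: (edge_not_reach_back G1 ab); rewrite (reach_mix_from_closed ba (B_closed ab aB)).
  by move: (edge_not_reach_back G2 ab); case/andP: (reach_mix_to_open aC (negbT aB) ba) => _ ->.
Qed.

End MixCgraph.

Section Stochastic.
Variables (R : realType) (S : finType) (q : S -> S -> R).
Hypothesis q_stoch : stochastic q.

Lemma stochastic_ge0 x y : 0 <= q x y.
Proof. by case: q_stoch. Qed.

Lemma stochastic_sum1 x : \sum_y q x y = 1.
Proof. by case: q_stoch. Qed.

Lemma pgraph_ge0 (E : {set S * S}) : 0 <= pgraph q E.
Proof. by apply: prodr_ge0 => e _; apply: stochastic_ge0. Qed.

Lemma path_prob_ge0 x n (w : n.-tuple S) : 0 <= path_prob q x w.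
Proof. by apply: prodr_ge0 => i _; apply: stochastic_ge0. Qed.

End Stochastic.

Definition leading_weight (R : realType) (S : finType) (q : S -> S -> R)
    (C : {set S}) (y u : S) : R :=
  \sum_(E | is_Cgraphb C E && reach E u y) pgraph q E.

Definition graph_weight (R : realType) (S : finType) (q : S -> S -> R) (C : {set S}) : R :=
  \sum_(E | is_Cgraphb C E) pgraph q E.

Section MaxWeight.
Variables (R : realType) (S : finType) (q : S -> S -> R).
Hypothesis q_stoch : stochastic q.
Variables (C : {set S}) (y : S).
Hypothesis yC : y \notin C.

Lemma pgraph_le_max E : is_Cgraph C E -> pgraph q E <= max_pgraph q C.
Proof. by move=> G; apply: (le_bigmax_cond _ (P := is_Cgraphb C)); apply/is_CgraphbP. Qed.

Lemma max_pgraph_attained : exists2 E, is_Cgraph C E & pgraph q E = max_pgraph q C.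
Proof.
have star_in : is_Cgraphb C (star_graph C y) by apply/is_CgraphbP/star_graph_Cgraph.
rewrite /max_pgraph; have [E /is_CgraphbP G ->] := eq_bigmax (x := 0) _ _ (pgraph q) star_in
  (fun E _ => pgraph_ge0 q_stoch E).
by exists E.
Qed.

Lemma max_pgraph_le_graph_weight : max_pgraph q C <= graph_weight q C.
Proof.
have Z_ge0 : 0 <= graph_weight q C by apply: sumr_ge0 => E _; apply: pgraph_ge0.
apply: bigmax_le => // E GE; rewrite /graph_weight (bigD1 E) //= lerDl.
by apply: sumr_ge0 => E' _; apply: pgraph_ge0.
Qed.

End MaxWeight.

(* The injection behind the superharmonicity of [leading_weight]: a pair (u, E)
   in which u leads to y is sent to a C-graph in which x leads to y, namely E
   itself if u already reaches x, and otherwise E with the edge leaving x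
   redirected to u, the removed successor of x becoming the second component. *)
Definition reroute (S : finType) (x : S) (uE : S * {set S * S}) : {set S * S} * S :=
  let: (u, E) := uE in if reach E u x then (E, u) else (redirect E x u, succ E x).

Section Superharmonic.
Variables (R : realType) (S : finType) (q : S -> S -> R).
Hypothesis q_stoch : stochastic q.
Variables (C : {set S}) (y x : S).
Hypotheses (yC : y \notin C) (xC : x \in C).

Let leads (uE : S * {set S * S}) := is_Cgraphb C uE.2 && reach uE.2 uE.1 y.

Lemma reroute_inj : {in leads &, injective (reroute x)}.
Proof.
move=> [u1 E1] [u2 E2] /andP[/is_CgraphbP /= G1 _] /andP[/is_CgraphbP /= G2 _] /=.
have [u1x|u1Nx] := boolP (reach E1 u1 x); have [u2x|u2Nx] := boolP (reach E2 u2 x).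
- by case=> -> ->.
- case=> E12 u1s; rewrite E12 in u1x.
  by move: (not_reach_succ G2 xC); rewrite -u1s (reach_redirect_to u1x).
- case=> E21 su2; rewrite -E21 in u2x.
  by move: (not_reach_succ G1 xC); rewrite su2 (reach_redirect_to u2x).
- case=> E12 s12.
  have eq_u : u1 = u2.
    rewrite (edge_succ (redirect_Cgraph u1Nx G1 xC) (redirect_edge E1 x u1)) E12.
    by rewrite -(edge_succ (redirect_Cgraph u2Nx G2 xC) (redirect_edge E2 x u2)).
  subst u2; congr pair.
  by rewrite -(redirectK u1 G1 xC) -(redirectK u1 G2 xC) E12 s12.
Qed.

Lemma reroute_leads uE : leads uE ->
  is_Cgraphb C (reroute x uE).1 && reach (reroute x uE).1 x y.
Proof.
case: uE => u E /andP[/is_CgraphbP /= G uy] /=.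
have [ux|uNx] := boolP (reach E u x); rewrite /=.
  by apply/andP; split; [apply/is_CgraphbP|exact: (reach_confluent G yC ux uy)].
apply/andP; split; first exact/is_CgraphbP/(redirect_Cgraph uNx G xC).
exact: connect_trans (reach_edge (redirect_edge E x u)) (reach_redirect uNx uy).
Qed.

Lemma reroute_weight uE : leads uE ->
  q x uE.1 * pgraph q uE.2 = pgraph q (reroute x uE).1 * q x (reroute x uE).2.
Proof.
case: uE => u E /andP[/is_CgraphbP /= G _] /=.
by case: ifP => _ /=; rewrite ?(pgraph_redirect _ G xC) // mulrC.
Qed.

Lemma leading_weight_superharmonic :
  \sum_u q x u * leading_weight q C y u <= leading_weight q C y x.
Proof.
have -> : \sum_u q x u * leading_weight q C y u = \sum_(uE | leads uE) q x uE.1 * pgraph q uE.2.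
  by under eq_bigr do rewrite mulr_sumr; rewrite pair_big_dep.
rewrite /leading_weight.
under [leRHS]eq_bigr do rewrite -[pgraph q _]mulr1 -(stochastic_sum1 q_stoch x) mulr_sumr.
rewrite pair_big_dep; under [leLHS]eq_bigr => uE leads_uE do rewrite reroute_weight //.
apply: (ler_sum_inj (F := fun Ev => pgraph q Ev.1 * q x Ev.2)) reroute_inj _ _.
  by move=> uE /reroute_leads ->.
by move=> Ev _; rewrite mulr_ge0 ?(pgraph_ge0 q_stoch) ?(stochastic_ge0 q_stoch).
Qed.

End Superharmonic.

Section FirstStep.
Variables (R : realType) (S : finType) (q : S -> S -> R) (A : {set S}) (t : S).

Lemma path_prob_cons x n u (w : n.-tuple S) :
  path_prob q x [tuple of u :: w] = q x u * path_prob q u w.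
Proof.
rewrite /path_prob big_ord_recl; congr (_ * _); apply: eq_bigr => i _ /=.
by rewrite /bump /= !(set_nth_default u x) // add0n size_tuple // ltnS ltnW.
Qed.

Lemma hit_at0 x : hit_at q x A t 0 = q x t.
Proof.
rewrite /hit_at big_tuple_cons (bigD1 t) //= [X in _ + X]big1 => [|u ut].
  by rewrite big_tuple0 /= eqxx addr0 path_prob_cons /path_prob big_ord0 mulr1.
by rewrite big_tuple0 /= (negbTE ut).
Qed.

Lemma hit_atS x n :
  hit_at q x A t n.+1 = \sum_(u | u \notin A) q x u * hit_at q u A t n.
Proof.
rewrite /hit_at big_tuple_cons [RHS]big_mkcond; apply: eq_bigr => u _ /=.
case: (u \in A); first by rewrite big_pred0.
by rewrite mulr_sumr; apply: eq_bigr => w _; rewrite path_prob_cons.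
Qed.

Lemma avoid_upto0 x : avoid_upto q x A 0 = 1.
Proof. by rewrite /avoid_upto big_tuple0 /path_prob big_ord0. Qed.

Lemma avoid_uptoS x n :
  avoid_upto q x A n.+1 = \sum_(u | u \notin A) q x u * avoid_upto q u A n.
Proof.
rewrite /avoid_upto big_tuple_cons [RHS]big_mkcond; apply: eq_bigr => u _ /=.
case: (u \in A); first by rewrite big_pred0.
by rewrite mulr_sumr; apply: eq_bigr => w _; rewrite path_prob_cons.
Qed.

End FirstStep.

Section Absorption.
Variables (R : realType) (S : finType) (q : S -> S -> R).
Hypothesis q_stoch : stochastic q.
Variables (A : {set S}) (t : S).
Hypothesis tA : t \in A.

Lemma hit_at_ge0 x n : 0 <= hit_at q x A t n.
Proof. by apply: sumr_ge0 => w _; apply: (path_prob_ge0 q_stoch). Qed.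

Lemma avoid_upto_ge0 x n : 0 <= avoid_upto q x A n.
Proof. by apply: sumr_ge0 => w _; apply: (path_prob_ge0 q_stoch). Qed.

(* P_x(T^+_A > N, or T^+_A <= N and s_(T^+_A) = t): it decreases in N to
   [prob_first_hit q x A t]. *)
Definition first_hit_upto x N :=
  \sum_(0 <= n < N) hit_at q x A t n + avoid_upto q x A N.

Lemma first_hit_upto0 x : first_hit_upto x 0 = 1.
Proof. by rewrite /first_hit_upto big_geq // add0r avoid_upto0. Qed.

Lemma first_hit_uptoS x N : first_hit_upto x N.+1 =
  q x t + \sum_(u | u \notin A) q x u * first_hit_upto u N.
Proof.
rewrite /first_hit_upto big_nat_recl // hit_at0 avoid_uptoS -addrA; congr (_ + _).
under eq_bigr do rewrite hit_atS.
rewrite exchange_big -big_split /=; apply: eq_bigr => u _.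
by rewrite -mulr_sumr -mulrDr.
Qed.

Lemma first_hit_upto_nonincreasing x : nonincreasing_seq (first_hit_upto x).
Proof.
apply/nonincreasing_seqP => N; elim: N x => [|N IH] x.
  rewrite first_hit_uptoS first_hit_upto0 -(stochastic_sum1 q_stoch x) [leRHS](bigID (mem A)) /=.
  rewrite lerD //; last by under eq_bigr do rewrite first_hit_upto0 mulr1.
  by rewrite (bigD1 t) //= lerDl sumr_ge0 // => u _; apply: (stochastic_ge0 q_stoch).
rewrite [leRHS]first_hit_uptoS first_hit_uptoS lerD2l; apply: ler_sum => u _.
by apply: ler_wpM2l; [apply: (stochastic_ge0 q_stoch)|apply: IH].
Qed.

Lemma prob_first_hit_le x N : prob_first_hit q x A t <= first_hit_upto x N.
Proof.
have hit_sum_nd : nondecreasing_seq (fun N => \sum_(0 <= n < N) hit_at q x A t n).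
  apply/nondecreasing_seqP => n; rewrite big_nat_recr //= lerDl; exact: hit_at_ge0.
have avoid_ni : nonincreasing_seq (avoid_upto q x A).
  apply/nonincreasing_seqP => n; have /nonincreasing_seqP/(_ n) := first_hit_upto_nonincreasing x.
  rewrite /first_hit_upto big_nat_recr //= -addrA lerD2l => /(le_trans _); apply.
  by rewrite lerDr; apply: hit_at_ge0.
exact: (limnD_le_nonincreasing _ hit_sum_nd avoid_ni (avoid_upto_ge0 x)
  (first_hit_upto_nonincreasing x)).
Qed.

End Absorption.

Section Decay.
Variables (R : realType) (S : finType) (q : S -> S -> R).
Hypothesis q_stoch : stochastic q.
Variables (A : {set S}) (E : {set S * S}).
Hypotheses (G : is_Cgraph (~: A) E) (pE : 0 < pgraph q E).

Fixpoint exit_prob j x : R :=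
  if x \in A then 1 else
  if j is j'.+1 then q x (succ E x) * exit_prob j' (succ E x) else 0.

Lemma exit_prob_ge0 j x : 0 <= exit_prob j x.
Proof.
elim: j x => [|j IH] x /=; case: ifP => // _.
by rewrite mulr_ge0 ?IH ?(stochastic_ge0 q_stoch).
Qed.

Lemma edge_prob_gt0 a b : (a, b) \in E -> 0 < q a b.
Proof.
move=> ab; rewrite lt0r (stochastic_ge0 q_stoch) andbT.
by apply: contraTneq pE => qab; rewrite /pgraph (bigD1 (a, b)) //= qab mul0r ltxx.
Qed.

Lemma exit_prob_gt0 j x : (#|[set z | reach E x z]| <= j)%N -> 0 < exit_prob j x.
Proof.
elim: j x => [|j IH] x reach_le /=; case: ifPn => // xA.
  by move: reach_le; rewrite leqNgt => /negP[]; apply/card_gt0P; exists x; rewrite inE.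
have xC : x \in ~: A by rewrite inE.
rewrite mulr_gt0 ?edge_prob_gt0 ?(succ_edge G) // IH //.
by rewrite -ltnS (leq_trans (card_reach_succ_lt G xC)).
Qed.

Lemma exit_prob_in j x : x \in A -> exit_prob j x = 1.
Proof. by case: j => [|j] /= ->. Qed.

Lemma avoid_upto_le_exit j x : x \notin A -> avoid_upto q x A j <= 1 - exit_prob j x.
Proof.
elim: j x => [|j IH] x xA; first by rewrite avoid_upto0 /= (negbTE xA) subr0.
rewrite avoid_uptoS /= (negbTE xA).
apply: le_trans (_ : \sum_(u | u \notin A) q x u * (1 - exit_prob j u) <= _).
  by apply: ler_sum => u uA; rewrite ler_wpM2l ?(stochastic_ge0 q_stoch) ?IH.
have -> : \sum_(u | u \notin A) q x u * (1 - exit_prob j u) =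
          \sum_u q x u * (1 - exit_prob j u).
  rewrite [RHS](bigID (mem A)) /= [X in _ = X + _]big1 ?add0r // => u uA.
  by rewrite exit_prob_in // subrr mulr0.
under eq_bigr do rewrite mulrBr mulr1.
rewrite sumrB (stochastic_sum1 q_stoch) lerD2l lerN2 (bigD1 (succ E x)) //= lerDl.
by apply: sumr_ge0 => u _; rewrite mulr_ge0 ?exit_prob_ge0 ?(stochastic_ge0 q_stoch).
Qed.

Lemma avoid_upto_add j n x (V : R) : x \notin A ->
  (forall u, u \notin A -> avoid_upto q u A n <= V) ->
  avoid_upto q x A (j + n) <= avoid_upto q x A j * V.
Proof.
elim: j x => [|j IH] x xA avoid_le; first by rewrite add0n avoid_upto0 mul1r avoid_le.
rewrite addSn !avoid_uptoS mulr_suml; apply: ler_sum => u uA.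
by rewrite -mulrA ler_wpM2l ?(stochastic_ge0 q_stoch) ?IH.
Qed.

Lemma avoid_upto_small e : 0 < e -> exists N, forall x, x \notin A -> avoid_upto q x A N <= e.
Proof.
move=> e0; pose d := \big[Num.min/1]_x exit_prob #|S| x.
have d_gt0 : 0 < d.
  apply: (big_ind (fun v : R => 0 < v)) => // [a b a0 b0|x _]; first by rewrite lt_min a0.
  by apply: exit_prob_gt0; apply: max_card.
have d_le1 : d <= 1 by apply: bigmin_le_id.
have avoid_geo k x : x \notin A -> avoid_upto q x A (k * #|S|) <= (1 - d) ^+ k.
  elim: k x => [|k IH] x xA; first by rewrite mul0n avoid_upto0 expr0.
  rewrite mulSn exprSr; apply: le_trans (avoid_upto_add _ xA IH) _.
  rewrite mulrC ler_wpM2l ?exprn_ge0 ?subr_ge0 //.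
  apply: le_trans (avoid_upto_le_exit _ xA) _.
  by rewrite lerD2l lerN2 bigmin_le.
have geo_lt1 : `|1 - d| < 1 by rewrite ger0_norm ?subr_ge0 // ltrBlDr ltrDl.
have [k _ small_k] := cvgr0_norm_lt _ (cvg_geometric 1 geo_lt1) _ e0.
exists (k * #|S|)%N => x xA; apply: le_trans (avoid_geo k x xA) _.
have := small_k k (leqnn k); rewrite /geometric /= mul1r => /ltW; apply: le_trans.
exact: ler_norm.
Qed.

End Decay.

Section HitBound.
Variables (R : realType) (S : finType) (q : S -> S -> R).
Hypothesis q_stoch : stochastic q.
Variables (A : {set S}) (y : S).
Hypothesis yA : y \in A.

Local Notation H := (leading_weight q (~: A) y).
Local Notation Z := (graph_weight q (~: A)).

Lemma leading_weight_ge0 u : 0 <= H u.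
Proof. by apply: sumr_ge0 => E _; apply: pgraph_ge0. Qed.

Lemma leading_weight_self : H y = Z.
Proof. by apply: eq_bigl => E; rewrite connect0 andbT. Qed.

Lemma leading_weight_first_step x : x \notin A ->
  Z * q x y + \sum_(u | u \notin A) q x u * H u <= H x.
Proof.
move=> xA; have yNC : y \notin ~: A by rewrite inE yA.
apply: le_trans (leading_weight_superharmonic q_stoch yNC _); last by rewrite inE.
rewrite [leRHS](bigID (mem A)) /= lerD2r (bigD1 y) //= leading_weight_self mulrC lerDl.
by apply: sumr_ge0 => u _; rewrite mulr_ge0 ?leading_weight_ge0 ?(stochastic_ge0 q_stoch).
Qed.

Lemma graph_weight_first_hit_upto_le N x : x \notin A ->
  Z * first_hit_upto q A y x N <= H x + Z * avoid_upto q x A N.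
Proof.
elim: N x => [|N IH] x xA.
  by rewrite first_hit_upto0 avoid_upto0 lerDr leading_weight_ge0.
rewrite first_hit_uptoS avoid_uptoS mulrDr !mulr_sumr.
apply: le_trans (_ : Z * q x y + \sum_(u | u \notin A) q x u * (H u + Z * avoid_upto q u A N)
  <= _).
  rewrite lerD2l; apply: ler_sum => u uA.
  by rewrite mulrCA ler_wpM2l ?(stochastic_ge0 q_stoch) ?IH.
under eq_bigr do rewrite mulrDr mulrCA.
by rewrite big_split /= addrA lerD2r leading_weight_first_step.
Qed.

Lemma graph_weight_prob_first_hit_le s : s \notin A -> Z * prob_first_hit q s A y <= H s.
Proof.
move=> sA; have [Z0|Z_neq0] := eqVneq Z 0; first by rewrite Z0 mul0r leading_weight_ge0.
have Z_gt0 : 0 < Z by rewrite lt0r Z_neq0 sumr_ge0 // => E _; apply: pgraph_ge0.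
have [E /andP[/is_CgraphbP G pE_gt0]] : exists E, is_Cgraphb (~: A) E && (0 < pgraph q E).
  move: Z_neq0; rewrite psumr_neq0 => [/hasP[E _ ?]|E _]; [by exists E|exact: pgraph_ge0].
apply/ler_addgt0Pr => e e0.
have [N avoid_small] := avoid_upto_small q_stoch G pE_gt0 (divr_gt0 e0 Z_gt0).
apply: le_trans (_ : Z * first_hit_upto q A y s N <= _).
  by apply: ler_wpM2l; [exact: ltW|exact: (prob_first_hit_le q_stoch yA)].
apply: le_trans (graph_weight_first_hit_upto_le N sA) _.
by rewrite lerD2l -ler_pdivlMl // mulrC avoid_small.
Qed.

End HitBound.

Lemma exists_heavy_leading_graph (R : realType) (S : finType) (q : S -> S -> R)
    (A : {set S}) (y s : S) (a : R) (L : nat) :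
  stochastic q -> y \in A -> s \notin A -> 0 <= a -> a <= prob_first_hit q s A y ->
  (#|[set E : {set S * S} | is_Cgraphb (~: A) E]| <= L)%N ->
  exists E, [/\ is_Cgraph (~: A) E, reach E s y &
                a / L%:R * max_pgraph q (~: A) <= pgraph q E].
Proof.
move=> q_stoch yA sA a_ge0 a_le card_le.
have yC : y \notin ~: A by rewrite inE yA.
have sC : s \in ~: A by rewrite inE.
pose P E := is_Cgraphb (~: A) E && reach E s y.
have P_star : P (star_graph (~: A) y).
  by rewrite /P reach_star_graph // andbT; apply/is_CgraphbP/star_graph_Cgraph.
have [E /andP[/is_CgraphbP G sy] mean_le] := exists_ge_mean (pgraph q) P_star.
exists E; split=> //.
have card_P : (#|P| <= L)%N.
  apply: leq_trans card_le; apply: subset_leq_card; apply/fintype.subsetP => E'.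
  by rewrite inE unfold_in /P => /andP[].
have L_gt0 : (0 < L)%N by apply: leq_trans card_P; apply/card_gt0P; exists (star_graph (~: A) y).
rewrite mulrAC ler_pdivrMr ?ltr0n //.
have Z_ge0 : 0 <= graph_weight q (~: A) by apply: sumr_ge0 => E' _; apply: pgraph_ge0.
apply: le_trans (_ : a * graph_weight q (~: A) <= _).
  by apply: ler_wpM2l => //; apply: max_pgraph_le_graph_weight.
apply: le_trans (_ : prob_first_hit q s A y * graph_weight q (~: A) <= _).
  exact: ler_wpM2r.
rewrite mulrC; apply: le_trans (graph_weight_prob_first_hit_le q_stoch yA sA) _.
by apply: le_trans mean_le _; rewrite mulrC ler_wpM2l ?(pgraph_ge0 q_stoch) // ler_nat.
Qed.

Section Repair.
Variables (S : finType) (C : {set S}) (y : S).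
Hypothesis yC : y \notin C.

Definition leading_set (E : {set S * S}) := [set x in C | reach E x y].

Variables (E g : {set S * S}).
Hypotheses (G : is_Cgraph C E) (Gg : is_Cgraph C g).

Lemma leading_set_closed a b : (a, b) \in E -> a \in leading_set E ->
  (b \in leading_set E) || (b \notin C).
Proof.
move=> ab; rewrite !inE => /andP[aC ay].
have aNy : a != y by apply: contraTneq aC => ->.
have [w aw wy] := connect_first_step ay aNy.
by rewrite (edge_succ G ab) -(edge_succ G aw) wy andbT; case: (w \in C).
Qed.

Lemma nonleading_set_closed a b : (a, b) \in E -> a \in ~: leading_set E ->
  (b \in ~: leading_set E) || (b \notin C).
Proof.
move=> ab; rewrite !inE (edge_src_mem G ab) /= => aNy.
by apply/orP; left; apply: contra aNy => /andP[_]; apply: connect_trans (reach_edge ab).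
Qed.

Lemma leading_set_full : #|C :\: leading_set E| = 0%N -> forall x, x \in C -> reach E x y.
Proof.
move=> /eqP; rewrite cards_eq0 => /eqP/setP lagging0 x xC.
by move: (lagging0 x); rewrite !inE xC andbT => /negbFE.
Qed.

Let B := leading_set E.

Lemma repair_Cgraph : is_Cgraph C (mix E g B).
Proof. exact: (mix_Cgraph G Gg leading_set_closed). Qed.

Lemma repair_complement_Cgraph : is_Cgraph C (mix g E B).
Proof. by rewrite mixC; apply: (mix_Cgraph G Gg nonleading_set_closed). Qed.

Lemma reach_repair_leading x : reach E x y -> reach (mix E g B) x y.
Proof.
move: x; apply: connect_rev_ind => [|z w zw wy IH]; first exact: connect0.
apply: connect_trans IH; apply: reach_edge; rewrite mixE inE (edge_src_mem G zw) /=.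
by rewrite (connect_trans (reach_edge zw) wy).
Qed.

Lemma reach_repair s : reach g s y -> reach (mix E g B) s y.
Proof.
move: s; apply: connect_rev_ind => [|z w zw _ IH]; first exact: connect0.
case zB: (z \in B); last by apply: connect_trans IH; apply: reach_edge; rewrite mixE zB.
by apply: reach_repair_leading; move: zB; rewrite inE => /andP[].
Qed.

Lemma card_repair_lt s : reach g s y -> s \in C :\: B ->
  (#|C :\: leading_set (mix E g B)| < #|C :\: B|)%N.
Proof.
move=> sy sD; rewrite (cardsD1 s (C :\: B)) sD add1n ltnS.
apply: subset_leq_card; apply/fintype.subsetP => x; rewrite !inE => /andP[xNmy xC].
rewrite xC /= in xNmy *; rewrite andbT; apply/andP; split.
  by apply: contraNneq xNmy => ->; rewrite reach_repair.
by apply: contra xNmy => /reach_repair_leading.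
Qed.

End Repair.

Section Iterate.
Variables (R : realType) (S : finType) (q : S -> S -> R).
Hypothesis q_stoch : stochastic q.
Variables (C : {set S}) (y : S) (c : R).
Hypotheses (yC : y \notin C) (c_ge0 : 0 <= c) (c_le1 : c <= 1).

Local Notation M := (max_pgraph q C).

Lemma pgraph_repair_ge E g : is_Cgraph C E -> is_Cgraph C g -> c * M <= pgraph q g ->
  c * pgraph q E <= pgraph q (mix E g (leading_set C y E)).
Proof.
move=> G Gg g_heavy; set B := leading_set C y E.
have pE_le := pgraph_le_max q G.
have comp_le := pgraph_le_max q (repair_complement_Cgraph y G Gg).
have [M_gt0|M_le0] := ltP 0 M; last first.
  have -> : pgraph q E = 0 by apply/le_anti; rewrite (pgraph_ge0 q_stoch) (le_trans pE_le).
  by rewrite mulr0 pgraph_ge0.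
rewrite -(ler_pM2r M_gt0); apply: le_trans (_ : pgraph q E * pgraph q g <= _).
  by rewrite mulrAC mulrC ler_wpM2l ?(pgraph_ge0 q_stoch).
by rewrite -(pgraph_mix q E g B) ler_wpM2l ?(pgraph_ge0 q_stoch).
Qed.

Hypothesis heavy : forall s, s \in C -> exists g,
  [/\ is_Cgraph C g, reach g s y & c * M <= pgraph q g].

Lemma exists_leading_graph n E : is_Cgraph C E -> (#|C :\: leading_set C y E| <= n)%N ->
  exists E', [/\ is_Cgraph C E', forall x, x \in C -> reach E' x y &
                 c ^+ n * pgraph q E <= pgraph q E'].
Proof.
elim: n E => [|n IH] E G card_le.
  exists E; rewrite expr0 mul1r; split=> //; apply: leading_set_full.
  by apply/eqP; rewrite -leqn0.
have [lagging0|/card_gt0P[s sD]] := posnP #|C :\: leading_set C y E|.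
  exists E; split=> //; first exact: leading_set_full lagging0.
  by rewrite ler_piMl ?(pgraph_ge0 q_stoch) ?exprn_ile1.
have sC : s \in C by move: sD; rewrite inE => /andP[].
have [g [Gg sy g_heavy]] := heavy sC.
have [E' [G' leads pE']] := IH _ (repair_Cgraph yC G Gg)
  (leq_trans (card_repair_lt G sy sD) card_le).
exists E'; split=> //; apply: le_trans pE'.
by rewrite exprSr -mulrA ler_wpM2l ?exprn_ge0 ?pgraph_repair_ge.
Qed.

End Iterate.

Theorem lemma5 (R : realType) (S : finType) (q : S -> S -> R)
  (S1 : {set S}) (a : R) :
  (1 < #|S|)%N -> (1 < #|S1|)%N -> 0 < a ->
  stochastic q -> irreducible q ->
  (forall s t, s \in S1 -> t \in S1 ->
     a <= prob_first_hit q s (~: S1 :|: [set t]) t) ->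
  forall y, y \in S1 ->
    exists E : {set S * S},
      eta_maximal q ((a / (Lconst #|S|)%:R) ^+ #|S|) (S1 :\ y) E /\
      (forall s, s \in S1 :\ y -> leads_to (S1 :\ y) E s y).
Proof.
move=> S_gt1 _ a_gt0 q_stoch _ first_hit_ge y yS1.
set A := ~: S1 :|: [set y]; set L := Lconst #|S|; set c := a / L%:R.
have CA : S1 :\ y = ~: A by apply/setP => x; rewrite !inE negb_or negbK andbC.
have yA : y \in A by rewrite !inE eqxx orbT.
have yC : y \notin ~: A by rewrite inE yA.
have card_le : (#|[set E : {set S * S} | is_Cgraphb (~: A) E]| <= L)%N.
  exact: leq_trans (card_Cgraphs _ S_gt1) (Lconst_ge S_gt1).
have a_le1 : a <= 1.
  apply: le_trans (first_hit_ge _ _ yS1 yS1) _.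
  by rewrite -(first_hit_upto0 q A y y) (prob_first_hit_le q_stoch yA).
have L_gt0 : (0 < L)%N.
  by apply: leq_trans (Lconst_ge S_gt1); rewrite expn_gt0 ltn_predRL S_gt1.
have c_ge0 : 0 <= c by rewrite divr_ge0 ?ler0n ?ltW.
have c_le1 : c <= 1 by rewrite ler_pdivrMr ?ltr0n // mul1r (le_trans a_le1) ?ler1n.
have heavy s : s \in ~: A -> exists g,
    [/\ is_Cgraph (~: A) g, reach g s y & c * max_pgraph q (~: A) <= pgraph q g].
  move=> sC; have sA : s \notin A by move: sC; rewrite inE.
  have sS1 : s \in S1 by move: sC; rewrite -CA inE => /andP[].
  exact: (exists_heavy_leading_graph q_stoch yA sA (ltW a_gt0) (first_hit_ge _ _ sS1 yS1) card_le).
have [E0 G0 pE0] := max_pgraph_attained q_stoch yC.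
have [E [G leads pE]] := exists_leading_graph q_stoch yC c_ge0 c_le1 heavy G0 (max_card _).
rewrite CA; exists E; split; first by split=> //; rewrite -pE0.
by move=> s sC; split; [exact: yC | exact: leads].
Qed.
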